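(* Let $\mathcal{T}=(\mathcal{V},\mathcal{E})$ obey the LC-PF model and covariance assumption of the context, and let $k_1$ be as defined there. Let $\mathcal{E}_{full}\supseteq\mathcal{E}$ be a set of candidate edges on $\mathcal{V}$. Suppose that for all $a\neq b$ in $\mathcal{V}$, real numbers $\hat\phi_{ab}$ (empirical estimates) satisfy $|\hat\phi_{ab}-\phi_{ab}|<k_1/2$. Then the minimum weight spanning tree of $(\mathcal{V},\mathcal{E}_{full})$ with edge weights $\hat\phi_{ab}$ (the output of Algorithm 1) has edge set exactly $\mathcal{E}$.
   Context: $\mathcal{T}=(\mathcal{V},\mathcal{E})$ is a tree with a distinguished root (substation) of degree one. Each edge $(ab)$ has resistance $r_{ab}>0$ and reactance $x_{ab}>0$; $r_{\min},x_{\min}$ denote their minimum values. Let $H_{1/r},H_{1/x}$ be the weighted Laplacians with edge weights $1/r_{ab}$, $1/x_{ab}$, with the root row and column removed. Non-root nodes have random injections $p_a,q_a$. The LC-PF model gives $v=H_{1/r}^{-1}p+H_{1/x}^{-1}q$ and $\theta=H_{1/x}^{-1}p-H_{1/r}^{-1}q$; the root voltage is constant. Covariance assumption: $\Omega_p,\Omega_q$ are the covariances of $p,q$, and $\Omega_{pq}=\mathbb{E}[(p-\mathbb{E}p)(q-\mathbb{E}q)^T]=\Omega_{qp}^T$. For distinct non-root $a,b$, $\Omega_p(a,b)=\Omega_q(a,b)=\Omega_{qp}(a,b)=0$, and $\Omega_{qp}(a,a)\ge0$. Define $\phi_{ab}=\mathbb{E}[((v_a-\mathbb{E}v_a)-(v_b-\mathbb{E}v_b))^2]$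 and $k_1=\min(r_{\min}^2,x_{\min}^2)\min_{d}\big(\Omega_p(d,d)+\Omega_q(d,d)+2\Omega_{pq}(d,d)\big)$, the inner minimum being over non-root nodes $d$. *)

From HB Require Import structures.
From mathcomp Require Import all_boot all_order all_algebra.
Set Implicit Arguments. Unset Strict Implicit. Unset Printing Implicit Defensive.
Import Order.TTheory GRing.Theory Num.Theory.
Local Open Scope ring_scope.

Section Defs.
Variable R : realFieldType.
Variable n : nat.
(* vertices: 'I_n.+1 ; edges: 2-element subsets of vertices *)
Notation V := ('I_n.+1).

Definition adj (T : {set {set V}}) : rel V := fun x y => [set x; y] \in T.

(* T is a tree spanning all vertices: connected, and acyclic
   (every edge is a bridge), with all edges 2-element sets *)
Definition is_spanning_tree (T : {set {set V}}) : Prop :=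
  [/\ forall e, e \in T -> #|e| = 2%N,
      forall x y : V, connect (adj T) x y
    & forall e x y, e \in T -> e = [set x; y] ->
        ~~ connect (adj (T :\ e)) x y].

Definition minset (T : finType) (A : {pred T}) (f : T -> R) : R :=
  \big[Num.min/ head 0 [seq f x | x <- enum A]]_(x in A) f x.

Definition lap (E : {set {set V}}) (w : {set V} -> R) : 'M[R]_(n.+1) :=
  \matrix_(a, b) if a == b then \sum_(c | [set a; c] \in E) w [set a; c]
                 else if [set a; b] \in E then - w [set a; b] else 0.

(* Laplacian with root row and column removed; non-root node i : 'I_n is
   the vertex lift root i *)
Definition reduced (root : V) (L : 'M[R]_(n.+1)) : 'M[R]_n :=
  \matrix_(i, j) L (lift root i) (lift root j).

Definition Hmat (root : V) (E : {set {set V}}) (w : {set V} -> R) : 'M[R]_n :=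
  reduced root (lap E (fun e => (w e)^-1)).

(* joint covariance of (p ; q) *)
Definition jointcov (Op Oq Opq : 'M[R]_n) : 'M[R]_(n + n) :=
  block_mx Op Opq Opq^T Oq.

Definition psd m (M : 'M[R]_m) : Prop :=
  M^T = M /\ forall u : 'rV[R]_m, 0 <= (u *m M *m u^T) 0 0.

(* covariance of v = H_{1/r}^{-1} p + H_{1/x}^{-1} q over the non-root nodes *)
Definition vcov_nr (root : V) (E : {set {set V}}) (r x : {set V} -> R)
  (Op Oq Opq : 'M[R]_n) : 'M[R]_n :=
  let A := row_mx (invmx (Hmat root E r)) (invmx (Hmat root E x)) in
  A *m jointcov Op Oq Opq *m A^T.

(* covariance of v over all nodes; root voltage is constant *)
Definition vcov root E r x Op Oq Opq (a b : V) : R :=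
  match unlift root a, unlift root b with
  | Some i, Some j => vcov_nr root E r x Op Oq Opq i j
  | _, _ => 0
  end.

(* phi_ab = E[((v_a - E v_a) - (v_b - E v_b))^2] *)
Definition phi root E r x Op Oq Opq (a b : V) : R :=
  vcov root E r x Op Oq Opq a a + vcov root E r x Op Oq Opq b b
  - 2 * vcov root E r x Op Oq Opq a b.

Definition k1 (E : {set {set V}}) (r x : {set V} -> R) (Op Oq Opq : 'M[R]_n) : R :=
  Num.min (minset (mem E) r ^+ 2) (minset (mem E) x ^+ 2) *
  minset (mem [set: 'I_n]) (fun d => Op d d + Oq d d + 2 * Opq d d).

Definition weight (T : {set {set V}}) (w : {set V} -> R) : R :=
  \sum_(e in T) w e.

End Defs.

(* For a tree, the inverse of the reduced Laplacian H_w is the path matrix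
   whose (i, j) entry is the total weight of the edges lying above both i and j.
   Hence, in v_a - v_b, the coefficients of p_k and of q_k are, up to a common
   sign, the resistance and the reactance accumulated on the edges of the a-b
   path lying above k, and phi_ab is a sum over k of a nonnegative quadratic
   form in these accumulated weights.  If a and b are not adjacent in the tree,
   their path contains, besides any given edge {u, v}, a second edge e'; at a
   node k below e' superadditivity of the form yields phi_ab >= phi_uv + k1.
   With estimation errors below k1/2, every candidate non-edge is therefore
   heavier than each tree edge on the cycle it closes, and the exchange argument
   shows that the minimum spanning tree is E. *)

From Pilot Require Import Defs.
From HB Require Import structures.
From mathcomp Require Import all_boot all_order all_algebra.
From mathcomp Require Import ring lra.
Set Implicit Arguments. Unset Strict Implicit. Unset Printing Implicit Defensive.
Import Order.TTheory GRing.Theory Num.Theory.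

Lemma connect_invariant (T : finType) (e : rel T) (C : pred T) x y :
  (forall y z, C y -> e y z -> C z) -> C x -> connect e x y -> C y.
Proof.
move=> Ce Cx /connectP [p pth ->].
by elim: p x Cx pth => //= z p IH x Cx /andP [/(Ce _ _ Cx) Cz /(IH z Cz)].
Qed.
Arguments connect_invariant {T e} C {x y}.

Lemma set2_eq_cases (T : finType) (y z u v : T) : [set y; z] = [set u; v] ->
  (y = u /\ z = v) \/ (y = v /\ z = u).
Proof.
move=> yz_uv.
have : y \in [set u; v] by rewrite -yz_uv set21.
have : z \in [set u; v] by rewrite -yz_uv set22.
have : u \in [set y; z] by rewrite yz_uv set21.
have : v \in [set y; z] by rewrite yz_uv set22.
rewrite !in_set2.
by do 4!case/orP=> /eqP ?; subst; auto.
Qed.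

Lemma set2_of_card2 (T : finType) (e : {set T}) a b :
  #|e| = 2 -> a != b -> a \in e -> b \in e -> e = [set a; b].
Proof.
move=> ce ab ae be; apply/esym/eqP; rewrite eqEcard cards2 ab ce leqnn andbT.
by apply/subsetP => z /set2P [->|->].
Qed.

Lemma card2_set2 (T : finType) (e : {set T}) :
  #|e| = 2 -> exists u v, u != v /\ e = [set u; v].
Proof. by move/eqP/cards2P. Qed.

(** * Spanning trees *)

Section Graph.
Variable n : nat.
Notation V := 'I_n.+1.
Implicit Types (F T : {set {set V}}) (e f : {set V}).

Lemma adj_sym F : symmetric (adj F).
Proof. by move=> x y; rewrite /adj setUC. Qed.

Lemma connect_adj_sym F x y : connect (adj F) x y = connect (adj F) y x.
Proof. exact: (sym_connect_sym (adj_sym F)). Qed.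

Lemma connect_adj_subset F F' x y :
  F \subset F' -> connect (adj F) x y -> connect (adj F') x y.
Proof. by move=> sFF'; apply: connect_sub => y' z Fyz; apply/connect1/(subsetP sFF'). Qed.

Lemma connect_adj_set0 (x y : V) : connect (adj (set0 : {set {set V}})) x y -> x = y.
Proof.
move=> xy; apply/eqP; apply: (connect_invariant (eq_op x) _ (eqxx x) xy).
by move=> ? ?; rewrite /adj inE.
Qed.

Lemma connect_adj_setD1 F e u v x y : e = [set u; v] ->
  connect (adj F) x y ->
  [\/ connect (adj (F :\ e)) x y,
      connect (adj (F :\ e)) x u /\ connect (adj (F :\ e)) v y |
      connect (adj (F :\ e)) x v /\ connect (adj (F :\ e)) u y].
Proof.
move=> euv; set c := connect (adj (F :\ e)) => Fxy.
suff : [|| c x y, c x u && c v y | c x v && c u y].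
  by case/or3P => [|/andP[]|/andP[]]; [constructor 1|constructor 2|constructor 3].
pose C := [pred z | [|| c x z, c x u && c v z | c x v && c u z]].
apply: (connect_invariant C _ _ Fxy); last by rewrite /= /c connect0.
move=> y' z /= cy' Fyz; have [eyz|neyz] := eqVneq [set y'; z] e.
  move: cy'; rewrite euv in eyz; case: (set2_eq_cases eyz) => -[-> ->];
  by case/or3P => [->|/andP[-> _]|/andP[-> _]]; rewrite /c ?connect0 ?andbT ?orbT.
have Fe_yz : adj (F :\ e) y' z by rewrite /adj in_setD1 neyz.
by case/or3P: cy' => [h|/andP[-> h]|/andP[-> h]];
  rewrite /c (connect_trans h (connect1 Fe_yz)) ?orbT.
Qed.

Lemma tree_card2 T : is_spanning_tree T -> forall e, e \in T -> #|e| = 2.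
Proof. by case. Qed.

Lemma tree_connect T x y : is_spanning_tree T -> connect (adj T) x y.
Proof. by case. Qed.

Lemma tree_bridge T e u v : is_spanning_tree T -> e \in T -> e = [set u; v] ->
  ~~ connect (adj (T :\ e)) u v.
Proof. by case=> _ _ Tbr; apply: Tbr. Qed.

Lemma tree_connect_ends T e u v z : is_spanning_tree T -> e = [set u; v] ->
  connect (adj (T :\ e)) z u \/ connect (adj (T :\ e)) z v.
Proof.
by move=> HT euv; case: (connect_adj_setD1 euv (tree_connect z u HT)) => [|[]|[]]; auto.
Qed.

Lemma big_adj (R : nmodType) F a (G : {set V} -> R) :
  (forall e, e \in F -> #|e| = 2) ->
  (\sum_(c | [set a; c] \in F) G [set a; c] = \sum_(e in F | a \in e) G e)%R.
Proof.
move=> F2; rewrite -big_set -[RHS]big_set -big_imset /=.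
  apply: eq_bigl => e; apply/imsetP/idP => [[c] |]; rewrite !inE.
    by move=> acF ->; rewrite set21 andbT.
  case/andP=> eF ae; have [u [v [uv euv]]] := card2_set2 (F2 _ eF).
  move: ae; rewrite euv in eF *; rewrite in_set2 => /orP[] /eqP ->.
    by exists v; rewrite ?inE.
  by exists u; rewrite ?inE // setUC.
by move=> c c' _ _ /set2_eq_cases [[_ ->]|[-> <-]].
Qed.

(* In a tree, these are the edges of the path from a to b. *)
Definition sep_edges F a b := [set e in F | ~~ connect (adj (F :\ e)) a b].

Section SpanningTree.
Variable E : {set {set V}}.
Hypothesis HE : is_spanning_tree E.

Lemma sep_edges_edge e u v : e \in E -> e = [set u; v] -> sep_edges E u v = [set e].
Proof.
move=> eE euv; apply/setP => g; rewrite !inE; have [->|ge] := eqVneq g e.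
  by rewrite eE (tree_bridge HE eE euv).
apply/negbTE; rewrite negb_and negbK; apply/orP; right.
by apply: connect1; rewrite /adj -euv in_setD1 eq_sym ge.
Qed.

Lemma connect_sep_edges a b : connect (adj (sep_edges E a b)) a b.
Proof.
set S := sep_edges E a b.
suff conn_minus k (G : {set {set V}}) :
    #|G| = k -> G \subset E :\: S -> connect (adj (E :\: G)) a b.
  apply: connect_adj_subset (conn_minus _ _ erefl (subxx _)).
  by apply/subsetP => e; rewrite !inE; case: (e \in E); case: connect.
elim: k G => [|k IH] G cG sG.
  by move/eqP: cG; rewrite cards_eq0 => /eqP ->; rewrite setD0; apply: tree_connect.
have /set0Pn [g gG] : G != set0 by rewrite -card_gt0 cG.
have [gE gab] : g \in E /\ connect (adj (E :\ g)) a b.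
  by move/subsetP/(_ g gG): sG; rewrite !inE; case: (g \in E); case: connect.
have [u [v [_ guv]]] := card2_set2 (tree_card2 HE gE).
have sub : E :\: G \subset E :\ g.
  apply/subsetP => e; rewrite !inE => /andP[eG ->]; rewrite andbT.
  by apply: contraNneq eG => ->.
have Gg : E :\: (G :\ g) :\ g = E :\: G.
  by apply/setP => e; rewrite !inE; case: (e =P g) => [->|_]; rewrite ?gG ?andbF.
have cGg : #|G :\ g| = k by move: cG; rewrite (cardsD1 g G) gG add1n => -[].
move: (connect_adj_setD1 guv (IH _ cGg (subset_trans (subD1set G g) sG))).
rewrite Gg => -[//|[ag gb]|[ag gb]]; have /negP[] := tree_bridge HE gE guv.
- apply: connect_trans (connect_trans _ gab) _;
    by rewrite connect_adj_sym; apply: connect_adj_subset sub _.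
- apply: connect_trans (connect_adj_subset sub gb) _.
  by apply: connect_trans (connect_adj_subset sub ag); rewrite connect_adj_sym.
Qed.

Lemma sep_edges_other a b e : a != b -> [set a; b] \notin E ->
  e \in sep_edges E a b -> exists2 e', e' \in sep_edges E a b & e' != e.
Proof.
move=> ab abE eS; set S := sep_edges E a b.
case: (pickP [pred e' | (e' \in S) && (e' != e)]) => [e' /andP[]|none]; first by exists e'.
have sub : S \subset [set e].
  apply/subsetP => e' e'S; rewrite inE; apply: contraT => ne.
  by have := none e'; rewrite /= e'S ne.
have eE : e \in E by move: eS; rewrite inE => /andP[].
have [u [v [_ euv]]] := card2_set2 (tree_card2 HE eE).
case: (connect_adj_setD1 euv (connect_adj_subset sub (connect_sep_edges a b)));
  rewrite setDv.
- by move/connect_adj_set0 => eab; rewrite eab eqxx in ab.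
- by case=> /connect_adj_set0 au /connect_adj_set0 vb; move: abE; rewrite au -vb -euv eE.
- by case=> /connect_adj_set0 av /connect_adj_set0 ub; move: abE; rewrite av -ub setUC -euv eE.
Qed.

Lemma sep_edge_across_cut T f a b : is_spanning_tree T -> f \in T -> f = [set a; b] ->
  exists u v, [/\ [set u; v] \in sep_edges E a b,
    connect (adj (T :\ f)) a u & ~~ connect (adj (T :\ f)) a v].
Proof.
move=> HT fT fab; set c := connect (adj (T :\ f)).
have : [exists u, exists v, [&& [set u; v] \in sep_edges E a b, c a u & ~~ c a v]].
  apply: contraT; rewrite negb_exists => /forallP none.
  have /negP[] := tree_bridge HT fT fab.
  apply: (connect_invariant (c a) _ _ (connect_sep_edges a b)); last exact: connect0.
  move=> y z ay yz; apply: contraT => naz.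
  by have := none y; rewrite negb_exists => /forallP/(_ z); rewrite [_ \in _]yz ay naz.
by case/existsP => u /existsP[v /and3P[uvS au nav]]; exists u, v.
Qed.

Lemma spanning_subtree_eq T : is_spanning_tree T -> T \subset E -> T = E.
Proof.
move=> HT TE; apply/eqP; rewrite eqEsubset TE /=.
apply/subsetP => e eE; apply: contraT => eT.
have [u [v [_ euv]]] := card2_set2 (tree_card2 HE eE).
have /negP[] := tree_bridge HE eE euv; apply: connect_adj_subset (tree_connect u v HT).
apply/subsetP => g gT; rewrite in_setD1 (subsetP TE _ gT) andbT.
by apply: contraNneq eT => <-.
Qed.

End SpanningTree.

Section Exchange.
Variables (T : {set {set V}}) (f : {set V}) (a b u v : V).
Hypotheses (HT : is_spanning_tree T) (fab : f = [set a; b]).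
Hypotheses (au : connect (adj (T :\ f)) a u) (nav : ~~ connect (adj (T :\ f)) a v).

Lemma exchange_notin : [set u; v] \notin T :\ f.
Proof. by apply: contra nav => uvT; apply: connect_trans au (connect1 _). Qed.

Let T' := [set u; v] |: (T :\ f).

Let sub_T' : T :\ f \subset T'.
Proof. exact: subsetUr. Qed.

Lemma exchange_connect x y : connect (adj T') x y.
Proof.
suff to_a z : connect (adj T') z a.
  by apply: connect_trans (to_a x) _; rewrite connect_adj_sym.
have vb : connect (adj (T :\ f)) v b.
  by case: (tree_connect_ends v HT fab) => // va; move: nav; rewrite connect_adj_sym va.
have uv : connect (adj T') u v by apply: connect1; rewrite /adj setU11.
case: (tree_connect_ends z HT fab) => [za|zb]; first exact: connect_adj_subset sub_T' za.
apply: connect_trans (connect_adj_subset sub_T' zb) _; rewrite connect_adj_sym.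
apply: connect_trans (connect_adj_subset sub_T' au) (connect_trans uv _).
exact: connect_adj_subset sub_T' vb.
Qed.

Lemma exchange_bridge g x y : g \in T' -> g = [set x; y] ->
  ~~ connect (adj (T' :\ g)) x y.
Proof.
move=> gT' gxy; have [ge|ne] := eqVneq g [set u; v].
  rewrite ge /T' setU1K ?exchange_notin //; apply: contra nav => cxy.
  move: au cxy; case/set2_eq_cases: (etrans (esym ge) gxy) => -[-> ->] ax cxy.
    exact: connect_trans ax cxy.
  by apply: connect_trans ax _; rewrite connect_adj_sym.
have gTf : g \in T :\ f by move: gT'; rewrite in_setU1 (negbTE ne).
have gT : g \in T by move: gTf; rewrite inE => /andP[].
have subT : T' :\ g :\ [set u; v] \subset T :\ g.
  apply/subsetP => z; rewrite !in_setD1 in_setU1 in_setD1.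
  by case: (z == [set u; v]) => //=; case: (z == g) => //= /andP[_ ->].
have subTf : T' :\ g :\ [set u; v] \subset T :\ f.
  apply/subsetP => z; rewrite !in_setD1 in_setU1 in_setD1.
  by case: (z == [set u; v]) => //=; case: (z == g) => //=; case: (z == f).
have xy : connect (adj (T :\ f)) x y by apply: connect1; rewrite /adj -gxy.
apply/negP => /(connect_adj_setD1 (erefl [set u; v])) [cxy|[xu vy]|[xv uy]].
- by move/negP: (tree_bridge HT gT gxy); apply; apply: connect_adj_subset subT cxy.
- move/negP: nav; apply; apply: connect_trans au _.
  rewrite connect_adj_sym in xu; apply: connect_trans (connect_adj_subset subTf xu) _.
  apply: connect_trans xy _; rewrite connect_adj_sym; exact: connect_adj_subset subTf vy.
- move/negP: nav; apply; apply: connect_trans au _.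
  apply: connect_trans (connect_adj_subset subTf uy) _.
  rewrite connect_adj_sym in xy; apply: connect_trans xy _.
  exact: connect_adj_subset subTf xv.
Qed.

Lemma spanning_tree_exchange : is_spanning_tree T'.
Proof.
split; [|exact: exchange_connect|exact: exchange_bridge].
move=> e; rewrite in_setU1 in_setD1 => /orP[/eqP ->|/andP[_ eT]].
  have uv : u != v by apply: contra nav => /eqP <-.
  by rewrite cards2 uv.
exact: tree_card2 HT _ eT.
Qed.

End Exchange.

Section Descendants.
Variables (E : {set {set V}}) (root : V).
Hypothesis HE : is_spanning_tree E.

Definition desc e z := ~~ connect (adj (E :\ e)) root z.

Lemma desc_root e : desc e root = false.
Proof. by rewrite /desc connect0. Qed.

Lemma desc_connect e z z' : connect (adj (E :\ e)) z z' -> desc e z = desc e z'.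
Proof.
move=> zz'; congr negb; apply/idP/idP => [rz|rz']; first exact: connect_trans rz zz'.
by apply: connect_trans rz' _; rewrite connect_adj_sym.
Qed.

Lemma desc_set2 e u v : e \in E -> e = [set u; v] -> desc e u = ~~ desc e v.
Proof.
move=> eE euv; have /negP bridge := tree_bridge HE eE euv.
rewrite /desc negbK; case: (tree_connect_ends root HE euv) => rw; rewrite rw.
- apply/esym/negP => rv; apply: bridge.
  by rewrite connect_adj_sym in rw; apply: connect_trans rw rv.
- apply/negP => ru; apply: bridge.
  by rewrite connect_adj_sym in ru; apply: connect_trans ru rw.
Qed.

Lemma desc_other e g a c : g \in E -> g != e -> g = [set a; c] -> desc e a = desc e c.
Proof.
by move=> gE ge gac; apply/desc_connect/connect1; rewrite /adj -gac in_setD1 ge gE.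
Qed.

Lemma connect_desc_eq g a b : g \in E -> desc g a = desc g b ->
  connect (adj (E :\ g)) a b.
Proof.
move=> gE ab; have [u [v [_ guv]]] := card2_set2 (tree_card2 HE gE).
have uv := desc_set2 gE guv.
case: (tree_connect_ends a HE guv) => aw; case: (tree_connect_ends b HE guv) => bw;
  move: ab; rewrite (desc_connect aw) (desc_connect bw) ?uv; try by case: (desc g v).
all: by move=> _; apply: connect_trans aw _; rewrite connect_adj_sym.
Qed.

Lemma sep_edgesE a b e : (e \in sep_edges E a b) = (e \in E) && (desc e a != desc e b).
Proof.
rewrite inE; case eE: (e \in E) => //=; congr negb.
by apply/idP/eqP => [/desc_connect|/(connect_desc_eq eE)].
Qed.

Lemma sep_edges_desc a b e : e \in sep_edges E a b -> exists k, desc e (lift root k).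
Proof.
rewrite sep_edgesE => /andP[_ ab]; have [z Dz] : exists z, desc e z.
  by move: ab; case Da: (desc e a); [exists a | case Db: (desc e b); [exists b|]].
by case: (unliftP root z) Dz => [k ->|->]; [exists k | rewrite desc_root].
Qed.

Lemma desc_nested_end e1 e2 u2 v2 : e2 \in E -> e2 = [set u2; v2] ->
  desc e1 u2 -> forall y, desc e2 y -> desc e1 y.
Proof.
move=> e2E e2uv Du y Dy; have [<-//|ne] := eqVneq e2 e1.
rewrite /desc; apply/negP => ry.
have sub2 : E :\ e1 :\ e2 \subset E :\ e2 := setSD _ (subD1set E e1).
have sub1 : E :\ e1 :\ e2 \subset E :\ e1 := subD1set _ _.
case: (connect_adj_setD1 e2uv ry) => [ry'|[ru _]|[rv _]].
- by move/negP: Dy; apply; apply: connect_adj_subset sub2 ry'.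
- by move/negP: Du; apply; apply: connect_adj_subset sub1 ru.
- move: Du; rewrite (desc_other e2E ne e2uv) => /negP; apply.
  exact: connect_adj_subset sub1 rv.
Qed.

Lemma desc_disjoint e1 e2 u2 v2 p z : e2 = [set u2; v2] ->
  ~~ desc e1 u2 -> ~~ desc e1 v2 -> ~~ desc e2 p ->
  connect (adj (E :\ e1)) p z -> desc e1 z -> desc e2 z -> False.
Proof.
move=> e2uv nu nv np pz Dz1 Dz2.
have sub2 : E :\ e1 :\ e2 \subset E :\ e2 := setSD _ (subD1set E e1).
have sub1 : E :\ e1 :\ e2 \subset E :\ e1 := subD1set _ _.
case: (connect_adj_setD1 e2uv pz) => [pz'|[_ vz]|[_ uz]].
- by move: Dz2; rewrite -(desc_connect (connect_adj_subset sub2 pz')) (negbTE np).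
- by move: Dz1; rewrite -(desc_connect (connect_adj_subset sub1 vz)) (negbTE nv).
- by move: Dz1; rewrite -(desc_connect (connect_adj_subset sub1 uz)) (negbTE nu).
Qed.

Lemma desc_nested e1 e2 z : e1 \in E -> e2 \in E -> desc e1 z -> desc e2 z ->
  (forall y, desc e1 y -> desc e2 y) \/ (forall y, desc e2 y -> desc e1 y).
Proof.
move=> e1E e2E Dz1 Dz2.
have [u1 [v1 [_ e1uv]]] := card2_set2 (tree_card2 HE e1E).
have [u2 [v2 [_ e2uv]]] := card2_set2 (tree_card2 HE e2E).
have [<-|ne] := eqVneq e1 e2; first by left.
case Du2: (desc e1 u2); first by right; apply: desc_nested_end e2E e2uv Du2.
case Du1: (desc e2 u1); first by left; apply: desc_nested_end e1E e1uv Du1.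
exfalso; have nv2 : ~~ desc e1 v2 by rewrite -(desc_other e2E _ e2uv) ?Du2 // eq_sym.
have nv1 : ~~ desc e2 v1 by rewrite -(desc_other e1E ne e1uv) Du1.
case: (connect_adj_setD1 e1uv (tree_connect root z HE)) => [rz|[_ vz]|[_ uz]].
- by move: Dz1; rewrite /desc rz.
- exact: (desc_disjoint e2uv (negbT Du2) nv2 nv1 vz).
- exact: (desc_disjoint e2uv (negbT Du2) nv2 (negbT Du1) uz).
Qed.

End Descendants.

End Graph.

Local Open Scope ring_scope.

Lemma min_spanning_tree_eq (R : realFieldType) n (E Efull T : {set {set 'I_n.+1}})
    (w : {set 'I_n.+1} -> R) :
  is_spanning_tree E -> E \subset Efull ->
  (forall a b e, [set a; b] \in Efull -> [set a; b] \notin E ->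
     e \in sep_edges E a b -> w e < w [set a; b]) ->
  T \subset Efull -> is_spanning_tree T ->
  (forall T' : {set {set 'I_n.+1}},
     T' \subset Efull -> is_spanning_tree T' -> weight T w <= weight T' w) ->
  T = E.
Proof.
move=> HE EF gap TF HT Tmin; apply: (spanning_subtree_eq HE HT).
apply/subsetP => f fT; apply: contraT => fE.
have [a [b [_ fab]]] := card2_set2 (tree_card2 HT fT).
have [u [v [uvS au nav]]] := sep_edge_across_cut HE HT fT fab.
have uvF : [set u; v] \in Efull by apply: (subsetP EF); move: uvS; rewrite inE => /andP[].
have T'F : [set u; v] |: (T :\ f) \subset Efull.
  by rewrite subUset sub1set uvF (subset_trans (subD1set _ _) TF).
have := Tmin _ T'F (spanning_tree_exchange HT fab au nav).
rewrite /weight (big_setD1 f fT) (big_setU1 _ (exchange_notin au nav)) /= lerD2r.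
by rewrite leNgt fab gap // -fab ?(subsetP TF).
Qed.

Lemma big_two (R : nmodType) (T : finType) (u v : T) (F : T -> R) : u != v ->
  (forall z, z != u -> z != v -> F z = 0) -> \sum_z F z = F u + F v.
Proof.
move=> uv F0; rewrite (bigD1 u) //= (bigD1 v) 1?eq_sym //= big1 ?addr0 //.
by move=> z /andP[zv zu]; apply: F0.
Qed.

Lemma sum_lift_root (R : nmodType) n (root : 'I_n.+1) (F : 'I_n.+1 -> R) :
  \sum_z F z = F root + \sum_(k < n) F (lift root k).
Proof. by rewrite (bigD1_ord root). Qed.

Lemma sumr_le_subset (R : numDomainType) (T : finType) (A B : {set T}) (F : T -> R) :
  A \subset B -> (forall i, i \in B -> 0 <= F i) -> \sum_(i in A) F i <= \sum_(i in B) F i.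
Proof.
move=> AB F0; rewrite [X in _ <= X](big_setID A) /= (setIidPr AB) lerDl sumr_ge0 // => i.
by rewrite inE => /andP[_ /F0].
Qed.

Lemma minset_le (R : realFieldType) (T : finType) (A : {pred T}) (f : T -> R) y :
  y \in A -> Defs.minset A f <= f y.
Proof. by move=> yA; rewrite /Defs.minset (bigD1 y) //= ge_min lexx. Qed.

Lemma minset_gt0 (R : realFieldType) (T : finType) (A : {pred T}) (f : T -> R) y :
  y \in A -> (forall z, z \in A -> 0 < f z) -> 0 < Defs.minset A f.
Proof.
move=> yA f0; rewrite /Defs.minset; apply: (big_ind (fun z : R => 0 < z)) => //; last first.
  by move=> a b a0 b0; rewrite lt_min a0 b0.
have : y \in enum A by rewrite mem_enum.
case: (enum A) (@mem_enum _ A) => [|z s] mem_s //= _.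
by apply: f0; rewrite -mem_s in_cons eqxx.
Qed.

Lemma psd_diag_ge0 (R : realFieldType) m (M : 'M[R]_m) i : psd M -> 0 <= M i i.
Proof.
case=> _ /(_ (delta_mx 0 i)).
by rewrite -rowE trmx_delta -colE !mxE.
Qed.

Lemma mulmx_diag_tr (R : ringType) m (A B M : 'M[R]_m) i j :
  (forall k l, k != l -> M k l = 0) -> (A *m M *m B^T) i j = \sum_k A i k * M k k * B j k.
Proof.
move=> Mdiag; rewrite mxE; apply: eq_bigr => l _; rewrite !mxE.
by rewrite (bigD1 l) //= big1 ?addr0 // => k kl; rewrite Mdiag ?mulr0.
Qed.

Section QuadraticForm.
Variable R : realFieldType.
Implicit Types P Q S a b : R.

(* [qform (Op k k) (Oq k k) (Opq k k) a b] is the variance of [a p_k + b q_k]. *)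
Definition qform P Q S a b := a ^+ 2 * P + b ^+ 2 * Q + 2 * a * b * S.

Lemma qformNN P Q S a b : qform P Q S (- a) (- b) = qform P Q S a b.
Proof. by rewrite /qform; ring. Qed.

Variables P Q S : R.
Hypotheses (P0 : 0 <= P) (Q0 : 0 <= Q) (S0 : 0 <= S).

Lemma qform_le a b a' b' : 0 <= a -> a <= a' -> 0 <= b -> b <= b' ->
  qform P Q S a b <= qform P Q S a' b'.
Proof.
move=> a0 aa' b0 bb'; rewrite /qform.
have sq_le c c' : 0 <= c -> c <= c' -> c ^+ 2 <= c' ^+ 2.
  by move=> c0 cc'; rewrite !expr2 ler_pM.
rewrite lerD // ?lerD // ?ler_wpM2r ?sq_le //.
by rewrite -!mulrA ler_wpM2l // ler_pM.
Qed.

Lemma qform_superadd a b a' b' : 0 <= a -> 0 <= b -> 0 <= a' -> 0 <= b' ->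
  qform P Q S a b + qform P Q S a' b' <= qform P Q S (a + a') (b + b').
Proof.
move=> a0 b0 a'0 b'0; rewrite -subr_ge0.
have -> : qform P Q S (a + a') (b + b') - (qform P Q S a b + qform P Q S a' b') =
    2 * (a * a' * P + b * b' * Q + (a * b' + a' * b) * S) by rewrite /qform; ring.
by rewrite mulr_ge0 // !addr_ge0 // !mulr_ge0 // addr_ge0 // mulr_ge0.
Qed.

Lemma qform_ge m a b : 0 <= m -> m <= a ^+ 2 -> m <= b ^+ 2 -> m <= a * b ->
  m * (P + Q + 2 * S) <= qform P Q S a b.
Proof.
move=> m0 ma mb mab; rewrite -subr_ge0.
have -> : qform P Q S a b - m * (P + Q + 2 * S) =
    (a ^+ 2 - m) * P + (b ^+ 2 - m) * Q + 2 * (a * b - m) * S by rewrite /qform; ring.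
by rewrite !addr_ge0 // !mulr_ge0 // subr_ge0.
Qed.

End QuadraticForm.

(** * The reduced Laplacian of a tree and its inverse *)

Section TreeLaplacian.
Variables (R : realFieldType) (n : nat) (root : 'I_n.+1) (E : {set {set 'I_n.+1}}).
Hypothesis HE : is_spanning_tree E.
Notation V := 'I_n.+1.
Implicit Types (e : {set V}) (a b z : V).

Definition incidence e z : R :=
  if z \in e then (if desc E root e z then 1 else -1) else 0.

Definition desc_ind e z : R := (desc E root e z)%:R.

Lemma incidence_out e z : z \notin e -> incidence e z = 0.
Proof. by rewrite /incidence => /negbTE ->. Qed.

Lemma incidence_sqr e z : incidence e z ^+ 2 = (z \in e)%:R.
Proof.
rewrite /incidence; case: (z \in e); case: (desc E root e z);
  by rewrite ?sqrrN ?expr1n // expr2 mul0r.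
Qed.

Lemma incidence_edge_mul e u v : e \in E -> e = [set u; v] ->
  incidence e u * incidence e v = -1.
Proof.
move=> eE euv; rewrite /incidence euv !in_set2 !eqxx orbT /= -euv.
by rewrite (desc_set2 root HE eE euv); case: (desc E root e v); rewrite /= ?mulr1 ?mul1r.
Qed.

Lemma incidence_mul_other e a b : e \in E -> a != b -> e != [set a; b] ->
  incidence e a * incidence e b = 0.
Proof.
move=> eE ab ne; case ae: (a \in e); last by rewrite incidence_out ?ae ?mul0r.
case be: (b \in e); last by rewrite (incidence_out (z := b)) ?be ?mulr0.
by rewrite (set2_of_card2 (tree_card2 HE eE) ab ae be) eqxx in ne.
Qed.

Lemma incidence_desc_orth e e' : e \in E -> e' \in E ->
  \sum_(k < n) incidence e (lift root k) * desc_ind e' (lift root k) = (e == e')%:R.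
Proof.
move=> eE e'E; have [u [v [uv euv]]] := card2_set2 (tree_card2 HE eE).
have := sum_lift_root root (fun z => incidence e z * desc_ind e' z).
rewrite /desc_ind desc_root mulr0 add0r => <-.
rewrite (big_two uv) => [|z zu zv]; last first.
  by rewrite incidence_out ?mul0r // euv in_set2 negb_or zu zv.
rewrite /incidence euv !in_set2 !eqxx orbT /= -euv (desc_set2 root HE eE euv).
have [<-|ne] := eqVneq e e'.
  rewrite (desc_set2 root HE eE euv).
  by case: (desc E root e v); rewrite /= ?mulr1 ?mulr0 ?addr0 ?add0r.
rewrite (desc_other root eE ne euv).
by case: (desc E root e v); case: (desc E root e' v);
  rewrite /= ?mulr1 ?mulr0 ?addr0 ?add0r ?subrr ?addNr.
Qed.

Lemma lap_tree (w : {set V} -> R) a b :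
  lap E w a b = \sum_(e in E) w e * incidence e a * incidence e b.
Proof.
rewrite /lap mxE; have [<-|ab] := eqVneq a b.
  rewrite big_adj; last exact: tree_card2 HE.
  rewrite big_mkcondr /=; apply: eq_bigr => e _.
  by rewrite -mulrA -expr2 incidence_sqr; case: (a \in e); rewrite ?mulr1 ?mulr0.
have other e : e \in E -> e != [set a; b] -> w e * incidence e a * incidence e b = 0.
  by move=> eE ne; rewrite -mulrA incidence_mul_other ?mulr0.
case: ifP => abE.
  rewrite (bigD1 [set a; b]) //= big1 => [|e /andP[]]; last exact: other.
  by rewrite -mulrA incidence_edge_mul // mulrN1 addr0.
by rewrite big1 // => e eE; apply: other => //; apply: contraFneq abE => <-.
Qed.

Lemma HmatE (w : {set V} -> R) i j :
  Hmat root E w i j =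
  \sum_(e in E) (w e)^-1 * incidence e (lift root i) * incidence e (lift root j).
Proof. by rewrite /Hmat /reduced mxE lap_tree. Qed.

Definition pathmx (w : {set V} -> R) : 'M[R]_n :=
  \matrix_(i, j) \sum_(e in E) w e * desc_ind e (lift root i) * desc_ind e (lift root j).

Lemma Hmat_pathmx (w : {set V} -> R) : (forall e, e \in E -> w e != 0) ->
  Hmat root E w *m pathmx w =
  \matrix_(i, j) \sum_(e in E) incidence e (lift root i) * desc_ind e (lift root j).
Proof.
move=> wnz; apply/matrixP => i j; rewrite !mxE.
rewrite (eq_bigr (fun k => \sum_(e in E) \sum_(e' in E)
   ((w e)^-1 * incidence e (lift root i) * w e' * desc_ind e' (lift root j)) *
   (incidence e (lift root k) * desc_ind e' (lift root k)))); last first.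
  move=> k _; rewrite HmatE mxE mulr_suml; apply: eq_bigr => e eE.
  by rewrite mulr_sumr; apply: eq_bigr => e' _; ring.
rewrite exchange_big /=; apply: eq_bigr => e eE; rewrite exchange_big /=.
rewrite (bigD1 e) //= -mulr_sumr incidence_desc_orth // eqxx mulr1.
rewrite big1 ?addr0 => [|e' /andP[e'E ne]].
  by rewrite [_^-1 * _ * _]mulrAC mulVf ?wnz // mul1r.
by rewrite -mulr_sumr incidence_desc_orth // eq_sym (negbTE ne) mulr0.
Qed.

Lemma Hmat_pathmx_Hmat (w : {set V} -> R) : (forall e, e \in E -> w e != 0) ->
  Hmat root E w *m pathmx w *m Hmat root E w = Hmat root E w.
Proof.
move=> wnz; rewrite Hmat_pathmx //; apply/matrixP => i j; rewrite [RHS]HmatE [LHS]mxE.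
rewrite (eq_bigr (fun k => \sum_(e in E) \sum_(e' in E)
   (incidence e (lift root i) * (w e')^-1 * incidence e' (lift root j)) *
   (incidence e' (lift root k) * desc_ind e (lift root k)))); last first.
  move=> k _; rewrite HmatE mxE mulr_suml; apply: eq_bigr => e eE.
  by rewrite mulr_sumr; apply: eq_bigr => e' _; ring.
rewrite exchange_big /=; apply: eq_bigr => e eE; rewrite exchange_big /=.
rewrite (bigD1 e) //= -mulr_sumr incidence_desc_orth // eqxx mulr1.
rewrite big1 ?addr0 => [|e' /andP[e'E ne]].
  by rewrite mulrAC mulrC mulrA.
by rewrite -mulr_sumr incidence_desc_orth // (negbTE ne) mulr0.
Qed.

Lemma Hmat_quad (w : {set V} -> R) (u : 'rV[R]_n) :
  (u *m Hmat root E w *m u^T) 0 0 =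
  \sum_(e in E) (w e)^-1 * (\sum_i u 0 i * incidence e (lift root i)) ^+ 2.
Proof.
have -> : Hmat root E w = \matrix_(i, j)
    \sum_(e in E) (w e)^-1 * incidence e (lift root i) * incidence e (lift root j).
  by apply/matrixP => i j; rewrite HmatE mxE.
rewrite !mxE (eq_bigr (fun j => \sum_(e in E) \sum_i
   ((w e)^-1 * (u 0 i * incidence e (lift root i)) * (u 0 j * incidence e (lift root j))))).
  rewrite exchange_big /=; apply: eq_bigr => e _.
  rewrite expr2 !mulr_sumr; apply: eq_bigr => j _.
  by rewrite mulr_suml mulr_sumr; apply: eq_bigr => i _; ring.
move=> j _; rewrite !mxE mulr_suml exchange_big /=.
by apply: eq_bigr => i _; rewrite !mxE mulr_sumr mulr_suml; apply: eq_bigr => e _; ring.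
Qed.

Lemma incidence_orth_eq0 (u : 'rV[R]_n) :
  (forall e, e \in E -> \sum_i u 0 i * incidence e (lift root i) = 0) -> u = 0.
Proof.
move=> orth; pose ut z := if unlift root z is Some i then u 0 i else 0.
have utl i : ut (lift root i) = u 0 i by rewrite /ut liftK.
have utr : ut root = 0 by rewrite /ut unlift_none.
have ut_edge y z : [set y; z] \in E -> ut y = ut z.
  move=> yzE; have [->//|yz] := eqVneq y z.
  have := orth _ yzE; under eq_bigr do rewrite -utl.
  have := sum_lift_root root (fun z' => ut z' * incidence [set y; z] z').
  rewrite utr mul0r add0r => <-.
  rewrite (big_two yz) => [|z' z'y z'z]; last first.
    by rewrite incidence_out ?mulr0 // in_set2 negb_or z'y z'z.
  rewrite /incidence !in_set2 !eqxx orbT /= (desc_set2 root HE yzE (erefl _)).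
  case: (desc E root [set y; z] z) => /=; rewrite ?mulrN1 ?mulr1 => /eqP.
    by rewrite addrC subr_eq0 => /eqP.
  by rewrite subr_eq0 => /eqP.
have ut0 z : ut z = 0.
  apply/eqP; apply: (connect_invariant [pred z | ut z == 0] _ _ (tree_connect root z HE)).
    by move=> y z' /= /eqP uty /ut_edge <-; rewrite uty.
  by rewrite /= utr.
by apply/rowP => i; rewrite mxE -utl ut0.
Qed.

Lemma Hmat_unit (w : {set V} -> R) : (forall e, e \in E -> 0 < w e) ->
  Hmat root E w \in unitmx.
Proof.
move=> wpos; have Hinj (u : 'rV_n) : u *m Hmat root E w = 0 -> u = 0.
  move=> uH; apply: incidence_orth_eq0 => e eE.
  have summand_ge0 e' : e' \in E ->
      0 <= (w e')^-1 * (\sum_i u 0 i * incidence e' (lift root i)) ^+ 2.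
    by move=> e'E; rewrite mulr_ge0 ?sqr_ge0 // invr_ge0 ltW ?wpos.
  have := Hmat_quad w u; rewrite uH mul0mx mxE => /esym/(psumr_eq0P summand_ge0)/(_ e eE).
  by move/eqP; rewrite mulf_eq0 invr_eq0 (gt_eqF (wpos _ eE)) sqrf_eq0 => /eqP.
rewrite -row_free_unit -kermx_eq0; apply/eqP/row_matrixP => k; rewrite row0.
by apply: Hinj; rewrite -row_mul mulmx_ker row0.
Qed.

Lemma invmx_Hmat (w : {set V} -> R) : (forall e, e \in E -> 0 < w e) ->
  invmx (Hmat root E w) = pathmx w.
Proof.
move=> wpos; have Hu := Hmat_unit wpos; set H := Hmat root E w.
have /Hmat_pathmx_Hmat HZH : forall e, e \in E -> w e != 0 by move=> e /wpos /gt_eqF ->.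
transitivity (invmx H *m (H *m pathmx w *m H) *m invmx H).
  by rewrite HZH mulVmx // mul1mx.
by rewrite !mulmxA mulVmx // mul1mx -mulmxA mulmxV // mulmx1.
Qed.

(** * Voltage differences along tree paths *)

Variables (r x : {set V} -> R) (Op Oq Opq : 'M[R]_n).
Hypotheses (rpos : forall e, e \in E -> 0 < r e) (xpos : forall e, e \in E -> 0 < x e).
Hypothesis Odiag : forall a b : 'I_n, a != b ->
  [/\ Op a b = 0, Oq a b = 0 & Opq^T a b = 0].

Definition pathw (w : {set V} -> R) z (k : 'I_n) : R :=
  \sum_(e in E) w e * desc_ind e z * desc_ind e (lift root k).

Lemma pathw_root w k : pathw w root k = 0.
Proof. by apply: big1 => e _; rewrite /desc_ind desc_root mulr0 mul0r. Qed.

Lemma vcov_pathw a b : vcov root E r x Op Oq Opq a b =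
  \sum_k (pathw r a k * Op k k * pathw r b k + pathw x a k * Opq k k * pathw r b k +
          pathw r a k * Opq k k * pathw x b k + pathw x a k * Oq k k * pathw x b k).
Proof.
rewrite /vcov; case: unliftP => [i ->|->]; last first.
  by rewrite big1 // => k _; rewrite !pathw_root; ring.
case: unliftP => [j ->|->]; last by rewrite big1 // => k _; rewrite !pathw_root; ring.
rewrite /vcov_nr /jointcov !invmx_Hmat // mul_row_block tr_row_mx mul_row_col !mulmxDl.
have addE (A B : 'M[R]_n) : (A + B) i j = A i j + B i j by rewrite mxE.
have Op_diag k l : k != l -> Op k l = 0 by case/Odiag.
have Oq_diag k l : k != l -> Oq k l = 0 by case/Odiag.
have OpqT_diag k l : k != l -> Opq^T k l = 0 by case/Odiag.
have Opq_diag k l : k != l -> Opq k l = 0 by rewrite eq_sym => /OpqT_diag; rewrite mxE.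
rewrite !addE !mulmx_diag_tr //.
rewrite -!big_split /=; apply: eq_bigr => k _; rewrite !mxE /pathw; ring.
Qed.

Lemma phi_pathw a b : phi root E r x Op Oq Opq a b =
  \sum_k qform (Op k k) (Oq k k) (Opq k k)
               (pathw r a k - pathw r b k) (pathw x a k - pathw x b k).
Proof.
rewrite /phi !vcov_pathw mulr_sumr -sumrN -!big_split /=.
by apply: eq_bigr => k _; rewrite /qform; ring.
Qed.

Definition sepw (w : {set V} -> R) a b (k : 'I_n) : R :=
  \sum_(e in sep_edges E a b) w e * desc_ind e (lift root k).

Lemma sepw_edge w e u v k : e \in E -> e = [set u; v] ->
  sepw w u v k = w e * desc_ind e (lift root k).
Proof. by move=> eE euv; rewrite /sepw (sep_edges_edge HE eE euv) big_set1. Qed.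

Lemma sepw_ge_sum w a b k (A : {set {set V}}) : (forall e, e \in E -> 0 <= w e) ->
  A \subset sep_edges E a b -> \sum_(e in A) w e * desc_ind e (lift root k) <= sepw w a b k.
Proof.
move=> w0 AS; apply: sumr_le_subset => // e; rewrite inE => /andP[eE _].
by rewrite mulr_ge0 ?w0 ?ler0n.
Qed.

Lemma pathw_sub_sepw a b k :
  (forall w, pathw w a k - pathw w b k = sepw w a b k) \/
  (forall w, pathw w a k - pathw w b k = - sepw w a b k).
Proof.
set kk := lift root k.
have pathwB w : pathw w a k - pathw w b k =
    \sum_(e in E) w e * desc_ind e kk * (desc_ind e a - desc_ind e b).
  by rewrite /pathw -sumrB; apply: eq_bigr => e _; ring.
have sepwE w : sepw w a b k = \sum_(e in E)
    w e * desc_ind e kk * (desc E root e a != desc E root e b)%:R.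
  rewrite /sepw (eq_bigl _ _ (sep_edgesE root HE a b)) big_mkcondr /=.
  by apply: eq_bigr => e _; case: (_ != _); rewrite ?mulr1 ?mulr0.
(* The separating edges with k below them lie on the root path of k, so they
   are nested and either all of them or none has a below it. *)
case: (boolP [exists e in E,
               [&& desc E root e kk, desc E root e a & ~~ desc E root e b]]).
  case/exists_inP => e1 e1E /and3P[d1k d1a nd1b]; left => w.
  rewrite pathwB sepwE; apply: eq_bigr => e eE; rewrite /desc_ind.
  case dk: (desc E root e kk); rewrite ?mulr0 ?mul0r //.
  case da: (desc E root e a); case db: (desc E root e b); rewrite ?subrr //= ?subr0 //.
  case: (desc_nested HE e1E eE d1k dk) => [/(_ a d1a)|/(_ b db)];
    by rewrite ?da ?(negbTE nd1b).
rewrite negb_exists_in => /forall_inP none; right => w.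
rewrite pathwB sepwE -sumrN; apply: eq_bigr => e eE; rewrite /desc_ind.
case dk: (desc E root e kk); rewrite ?mulr0 ?mul0r ?oppr0 //.
case da: (desc E root e a); case db: (desc E root e b); rewrite ?subrr ?mulr0 ?oppr0 //=.
  by have := none e eE; rewrite dk da db.
by rewrite sub0r mulrN.
Qed.

Lemma phi_sepw a b : phi root E r x Op Oq Opq a b =
  \sum_k qform (Op k k) (Oq k k) (Opq k k) (sepw r a b k) (sepw x a b k).
Proof.
rewrite phi_pathw; apply: eq_bigr => k _.
by case: (pathw_sub_sepw a b k) => sub; rewrite !sub ?qformNN.
Qed.

Hypotheses (Op_ge0 : forall k, 0 <= Op k k) (Oq_ge0 : forall k, 0 <= Oq k k).
Hypothesis Opq_ge0 : forall k, 0 <= Opq k k.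

Lemma k1_le_qform e k : e \in E ->
  k1 E r x Op Oq Opq <= qform (Op k k) (Oq k k) (Opq k k) (r e) (x e).
Proof.
move=> eE; rewrite /k1.
set mr := Defs.minset _ r; set mx := Defs.minset _ x; set m := Num.min _ _.
have mr0 : 0 < mr by apply: minset_gt0 eE rpos.
have mx0 : 0 < mx by apply: minset_gt0 eE xpos.
have mre : mr <= r e by apply: minset_le.
have mxe : mx <= x e by apply: minset_le.
have m0 : 0 <= m by rewrite le_min !sqr_ge0.
have mr2 : m <= r e ^+ 2 by rewrite ge_min; apply/orP; left; nra.
have mx2 : m <= x e ^+ 2 by rewrite ge_min; apply/orP; right; nra.
have mrx : m <= r e * x e.
  by rewrite ge_min; apply/orP; case: (leP mr mx) => ?; [left|right]; nra.
apply: le_trans (qform_ge (Op_ge0 k) (Oq_ge0 k) (Opq_ge0 k) m0 mr2 mx2 mrx).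
by rewrite ler_wpM2l //; apply: minset_le; rewrite inE.
Qed.

Lemma phi_nonedge_gap a b e0 u v : a != b -> [set a; b] \notin E ->
  e0 \in sep_edges E a b -> e0 = [set u; v] ->
  phi root E r x Op Oq Opq u v + k1 E r x Op Oq Opq <= phi root E r x Op Oq Opq a b.
Proof.
move=> ab abE e0S e0uv; have [e1 e1S e10] := sep_edges_other HE ab abE e0S.
have e0E : e0 \in E by move: e0S; rewrite inE => /andP[].
have e1E : e1 \in E by move: e1S; rewrite inE => /andP[].
have r0 e : e \in E -> 0 <= r e by move/rpos/ltW.
have x0 e : e \in E -> 0 <= x e by move/xpos/ltW.
have [k Dk] := sep_edges_desc root HE e1S.
have sepw_ge w j : (forall e, e \in E -> 0 <= w e) ->
    w e0 * desc_ind e0 (lift root j) <= sepw w a b j.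
  move=> w0; apply: le_trans (sepw_ge_sum j w0 (_ : [set e0] \subset _)).
    by rewrite big_set1.
  by rewrite sub1set.
have sepw_ge2 w : (forall e, e \in E -> 0 <= w e) ->
    w e0 * desc_ind e0 (lift root k) + w e1 <= sepw w a b k.
  move=> w0; apply: le_trans (sepw_ge_sum k w0 (_ : [set e0; e1] \subset _)).
    by rewrite big_setU1 ?big_set1 /= ?inE 1?eq_sym // /desc_ind Dk mulr1.
  by rewrite subUset !sub1set e0S e1S.
rewrite !phi_sepw (bigD1 k) //= [X in _ <= X](bigD1 k) //= addrAC.
apply: lerD; last first.
  apply: ler_sum => j _; rewrite !(sepw_edge _ _ e0E e0uv).
  by apply: qform_le; rewrite ?mulr_ge0 ?r0 ?x0 ?ler0n ?sepw_ge.
apply: le_trans (lerD (lexx _) (k1_le_qform k e1E)) _.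
rewrite !(sepw_edge _ _ e0E e0uv).
have P0 := Op_ge0 k; have Q0 := Oq_ge0 k; have S0 := Opq_ge0 k.
apply: le_trans (qform_superadd P0 Q0 S0 _ _ _ _)
  (qform_le P0 Q0 S0 _ (sepw_ge2 _ r0) _ (sepw_ge2 _ x0));
  by rewrite /desc_ind ?addr_ge0 ?mulr_ge0 ?r0 ?x0 ?ler0n.
Qed.

End TreeLaplacian.

Unset Implicit Arguments.

Theorem theorem9 (R : realFieldType) (n : nat) (root : 'I_n.+1)
  (E Efull : {set {set 'I_n.+1}}) (r x : {set 'I_n.+1} -> R)
  (Op Oq Opq : 'M[R]_n) (phihat : {set 'I_n.+1} -> R) :
  is_spanning_tree E ->
  #|[set e in E | root \in e]| = 1%N ->
  (forall e, e \in E -> 0 < r e) ->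
  (forall e, e \in E -> 0 < x e) ->
  psd (jointcov Op Oq Opq) ->
  (forall a b : 'I_n, a != b ->
     [/\ Op a b = 0, Oq a b = 0 & Opq^T a b = 0]) ->
  (forall a : 'I_n, 0 <= Opq^T a a) ->
  E \subset Efull ->
  (forall e, e \in Efull -> #|e| = 2%N) ->
  (forall a b : 'I_n.+1, a != b ->
     `|phihat [set a; b] - phi root E r x Op Oq Opq a b| < k1 E r x Op Oq Opq / 2) ->
  forall T : {set {set 'I_n.+1}},
    T \subset Efull -> is_spanning_tree T ->
    (forall T' : {set {set 'I_n.+1}}, T' \subset Efull -> is_spanning_tree T' ->
       weight T phihat <= weight T' phihat) ->
    T = E.
Proof.
move=> HE _ rpos xpos Hpsd Odiag OpqT_ge0 EF F2 err T TF HT Tmin.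
have Op_ge0 k : 0 <= Op k k.
  by have := psd_diag_ge0 (lshift n k) Hpsd; rewrite /jointcov block_mxEul.
have Oq_ge0 k : 0 <= Oq k k.
  by have := psd_diag_ge0 (rshift n k) Hpsd; rewrite /jointcov block_mxEdr.
have Opq_ge0 k : 0 <= Opq k k by have := OpqT_ge0 k; rewrite mxE.
suff gap a b e : [set a; b] \in Efull -> [set a; b] \notin E -> e \in sep_edges E a b ->
    phihat e < phihat [set a; b] by exact: min_spanning_tree_eq HE EF gap TF HT Tmin.
move=> abF abE eS; have eE : e \in E by move: eS; rewrite inE => /andP[].
have [u [v [uv euv]]] := card2_set2 (tree_card2 HE eE).
have ab : a != b by have := F2 _ abF; rewrite cards2; case: (a != b).
have gap := phi_nonedge_gap root HE rpos xpos Odiag Op_ge0 Oq_ge0 Opq_ge0 ab abE eS euv.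
have := err _ _ ab; have := err _ _ uv; rewrite -euv !ltr_norml => /andP[? ?] /andP[? ?].
lra.
Qed.
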